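(* Let $p,q,p',q'\in(0,1/2)$ and suppose $K_{pq}$ and $K_{p'q'}$ are twofold Cantor sets, with generating systems $\{S_1,S_2,S_3,S_4\}$ and $\{S_1',S_2',S_3',S_4'\}$ respectively. Then: (i) there is a homeomorphism $f:K_{pq}\to K_{p'q'}$ realising an isomorphism of the self-similar structures, i.e. $f(S_i(x))=S_i'(f(x))$ for all $x\in K_{pq}$ and all $i\in\{1,2,3,4\}$; (ii) if $(p,q)\neq(p',q')$, then such a homeomorphism $f$ cannot be extended to a homeomorphism of $[0,1]$ onto itself.
   Context: For $p,q\in(0,1/2)$ let $S_1(x)=px$, $S_2(x)=qx$, $S_3(x)=px+1-p$, $S_4(x)=qx+1-q$, let $K_{pq}$ be the attractor of $\{S_1,S_2,S_3,S_4\}$ (the unique nonempty compact $K\subset\mathbb R$ with $K=\bigcup_{i=1}^4S_i(K)$), and let $A=S_3(K_{pq})\cup S_4(K_{pq})$. $K_{pq}$ is called a twofold Cantor set if $S_1^m(A)\cap S_2^n(A)=\varnothing$ for all $m,n\in\mathbb N$. The maps $S_i'$ are defined in the same way with $p',q'$ in place of $p,q$. *)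

From mathcomp Require Import all_boot all_order all_algebra.
From mathcomp Require Import all_classical all_reals all_analysis.
Set Implicit Arguments. Unset Strict Implicit. Unset Printing Implicit Defensive.
Import Order.TTheory GRing.Theory Num.Theory.
Import numFieldNormedType.Exports.
Local Open Scope classical_set_scope.
Local Open Scope ring_scope.

Section Defs.
Variable R : realType.

(* The four similitudes S_1..S_4, indexed by i : 'I_4 (i = 0,1,2,3 <-> S_1..S_4). *)
Definition Smap (p q : R) (i : 'I_4) (x : R) : R :=
  match nat_of_ord i with
  | 0 => p * x
  | 1 => q * x
  | 2 => p * x + 1 - p
  | _ => q * x + 1 - q
  end.

Definition is_attractor (p q : R) (K : set R) : Prop :=
  K !=set0 /\ compact K /\ K = \bigcup_(i : 'I_4) (Smap p q i @` K).

Definition Aset (p q : R) (K : set R) : set R :=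
  (Smap p q (inord 2) @` K) `|` (Smap p q (inord 3) @` K).

Definition twofold (p q : R) (K : set R) : Prop :=
  forall m n : nat, (0 < m)%N -> (0 < n)%N ->
    (iter m (Smap p q (inord 0)) @` Aset p q K) `&`
    (iter n (Smap p q (inord 1)) @` Aset p q K) = set0.

Definition homeo_on (A B : set R) (f : R -> R) : Prop :=
  exists g : R -> R,
    (forall x, A x -> B (f x)) /\
    (forall y, B y -> A (g y)) /\
    (forall x, A x -> g (f x) = x) /\
    (forall y, B y -> f (g y) = y) /\
    {within A, continuous f} /\
    {within B, continuous g}.
End Defs.

From mathcomp Require Import all_boot all_order all_algebra.
From mathcomp Require Import all_classical all_reals all_analysis.
From mathcomp Require Import ring lra zify.
Import Order.TTheory GRing.Theory Num.Theory.
Import numFieldNormedType.Exports.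
Local Open Scope classical_set_scope.
Local Open Scope ring_scope.
Set Implicit Arguments. Unset Strict Implicit. Unset Printing Implicit Defensive.

(* A point of K is the image [coding p q w] of its addresses w : nat -> 'I_4.
   The maps S_1 and S_2 commute, and for a twofold Cantor set the compact pieces
   p^m q^n A (A = S_3 K u S_4 K) are pairwise disjoint, so two addresses with
   close images start, up to a permutation of their S_1/S_2 letters, with the
   same block. By induction on the precision, [coding p q w] determines
   [coding p' q' w] uniformly continuously; the resulting map K -> K'
   conjugates S_i to S'_i and is a homeomorphism.
   A homeomorphism of [0,1] extending it fixes 0 and 1, so it is increasing and
   preserves the order of the points p^m q^n and p^m q^n (1 - p) of K. In
   logarithmic coordinates, m ln p + n ln q |-> m ln p' + n ln q' preserves
   signs and the cut at ln (1 - p). Since ln p / ln q is irrational, the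
   lattice Z ln p + Z ln q is dense, which forces
   (ln p', ln q', ln (1 - p')) = t (ln p, ln q, ln (1 - p)); finally
   p^t + (1 - p)^t = 1 gives t = 1. *)

Section Bounds.
Variable R : realType.

Lemma geometric_lt (C e : R) : 0 < e -> exists k, C * 2^-1 ^+ k < e.
Proof.
move=> e0; have : (fun k => C * 2^-1 ^+ k) @ \oo --> (0 : R).
  by rewrite -(mulr0 C); apply: cvgMr; apply: cvg_expr; rewrite ger0_norm; lra.
by move=> /cvgr_lt/(_ e e0) [N _ /(_ N (leqnn N))]; exists N.
Qed.

Lemma norm_geometric_eq0 (x C : R) : (forall k, `|x| <= C * 2^-1 ^+ k) -> x = 0.
Proof.
move=> Hx; apply/normr0_eq0/eqP; rewrite eq_le normr_ge0 andbT leNgt.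
by apply/negP => /(geometric_lt C) [k]; rewrite ltNge Hx.
Qed.

Lemma finite_pos_bound (I : finType) (P : I -> R -> Prop) :
  (forall i g g', 0 < g' <= g -> P i g -> P i g') ->
  (forall i, exists2 g, 0 < g & P i g) -> exists2 g, 0 < g & forall i, P i g.
Proof.
move=> Pmono Pex.
have nearP i : \forall g \near 0^'+, P i g.
  have [g g0 Pg] := Pex i; near=> g'; apply: (Pmono i g) Pg.
  apply/andP; split; near: g'; first exact: nbhs_right_gt.
  by apply: filterS (nbhs_right_lt g0) => ? /ltW.
have [g [g0 Pg]] : exists g, 0 < g /\ forall i, P i g.
  apply: (@filter_ex _ (0 : R)^'+); near=> g; split; near: g.
    exact: nbhs_right_gt.
  exact: filter_forall.
by exists g.
Unshelve. all: by end_near.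
Qed.

End Bounds.

Lemma mkseqD (T : Type) (f : nat -> T) m n :
  mkseq f (m + n) = mkseq f m ++ mkseq (fun l => f (m + l)%N) n.
Proof. by rewrite /mkseq iotaD map_cat add0n -[in iota m n](addn0 m) iotaDl -map_comp. Qed.

(** * Coding maps *)

Definition small (i : 'I_4) : bool := (i < 2)%N.

Section Words.
Variables (R : realType) (p q : R).
Implicit Types (i : 'I_4) (s : seq 'I_4) (x y : R).

Definition ratio i : R := if odd i then q else p.

Lemma Smap_affine i x : Smap p q i x = ratio i * x + Smap p q i 0.
Proof. by case: i => [[|[|[|[|n]]]] Hi] //=; rewrite /Smap /ratio /=; ring. Qed.

Lemma SmapB i x y : Smap p q i x - Smap p q i y = ratio i * (x - y).
Proof. by rewrite (Smap_affine i x) (Smap_affine i y); ring. Qed.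

Lemma Smap_small i x : small i -> Smap p q i x = ratio i * x.
Proof. by case: i => [[|[|[|[|n]]]] Hi]. Qed.

Lemma Smap_big i x : ~~ small i -> Smap p q i x = ratio i * x + 1 - ratio i.
Proof. by case: i => [[|[|[|[|n]]]] Hi]. Qed.

Lemma Smap_continuous i : continuous (Smap p q i).
Proof.
have -> : Smap p q i = fun x => ratio i * x + Smap p q i 0.
  by apply: funext => x; apply: Smap_affine.
by move=> x; apply: cvgD; [apply: cvgM; [exact: cvg_cst|exact: cvg_id]|exact: cvg_cst].
Qed.

Definition word_map s y : R := foldr (Smap p q) y s.

Definition word_ratio s : R := \prod_(i <- s) ratio i.

Lemma word_map_cat s t y : word_map (s ++ t) y = word_map s (word_map t y).
Proof. exact: foldr_cat. Qed.

Lemma word_mapB s x y : word_map s x - word_map s y = word_ratio s * (x - y).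
Proof.
elim: s => [|i s IH]; first by rewrite /word_ratio big_nil mul1r.
by rewrite /= SmapB IH /word_ratio big_cons mulrA.
Qed.

Hypotheses (hp : 0 < p < 2^-1) (hq : 0 < q < 2^-1).

Lemma ratio_gt0 i : 0 < ratio i.
Proof. by rewrite /ratio; case: ifP => _; [case/andP: hq|case/andP: hp]. Qed.

Lemma ratio_lt_half i : ratio i < 2^-1.
Proof. by rewrite /ratio; case: ifP => _; [case/andP: hq|case/andP: hp]. Qed.

Lemma word_ratio_gt0 s : 0 < word_ratio s.
Proof. by rewrite /word_ratio; elim/big_ind: _ => // *; [exact: mulr_gt0|exact: ratio_gt0]. Qed.

Lemma word_ratio_le s : word_ratio s <= 2^-1 ^+ size s.
Proof.
elim: s => [|i s IH]; first by rewrite /word_ratio big_nil.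
rewrite /word_ratio big_cons exprS ler_pM ?(ltW (ratio_gt0 _)) ?(ltW (ratio_lt_half _)) //.
exact: ltW (word_ratio_gt0 s).
Qed.

Lemma word_ratio_mkseq_le (w : nat -> 'I_4) k : word_ratio (mkseq w k) <= 2^-1 ^+ k.
Proof. by rewrite -{2}(size_mkseq w k) word_ratio_le. Qed.

Lemma word_map_le s x y : x <= y -> word_map s x <= word_map s y.
Proof.
by move=> xy; rewrite -subr_ge0 word_mapB mulr_ge0 ?subr_ge0 // ltW ?word_ratio_gt0.
Qed.

Lemma Smap_01 i x : 0 <= x <= 1 -> 0 <= Smap p q i x <= 1.
Proof.
case/andP: hp => hp0 hp1; case/andP: hq => hq0 hq1.
by case: i => [[|[|[|[|n]]]] Hi] //=; rewrite /Smap /= => /andP[x0 x1]; apply/andP; split; nra.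
Qed.

Lemma word_map_01 s y : 0 <= y <= 1 -> 0 <= word_map s y <= 1.
Proof. by elim: s => [|i s IH] //= /IH; apply: Smap_01. Qed.

End Words.

Definition shift (k : nat) (w : nat -> 'I_4) : nat -> 'I_4 := fun n => w (k + n)%N.

Section Coding.
Variables (R : realType) (p q : R).
Hypotheses (hp : 0 < p < 2^-1) (hq : 0 < q < 2^-1).
Implicit Types (w : nat -> 'I_4) (x y : R).
Local Notation word_map := (word_map p q).

Let zero_01 : (0 : R) <= (0 : R) <= 1. Proof. by rewrite lexx ler01. Qed.
Let one_01 : (0 : R) <= (1 : R) <= 1. Proof. by rewrite lexx ler01. Qed.

(* The approximants increase with [k], so the supremum is their limit. *)
Definition coding w : R := sup (range (fun k => word_map (mkseq w k) 0)).

Lemma word_map_mkseq_le w j k :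
  word_map (mkseq w j) 0 <= word_map (mkseq w k) 1.
Proof.
have [jk|kj] := leqP j k.
  rewrite -(subnKC jk) mkseqD word_map_cat; apply: word_map_le => //.
  by case/andP: (word_map_01 hp hq (mkseq (shift j w) (k - j)) one_01).
rewrite -(subnKC (ltnW kj)) mkseqD word_map_cat; apply: word_map_le => //.
by case/andP: (word_map_01 hp hq (mkseq (shift k w) (j - k)) zero_01).
Qed.

Lemma coding_bounds k w :
  word_map (mkseq w k) 0 <= coding w <= word_map (mkseq w k) 1.
Proof.
have ub : ubound (range (fun j => word_map (mkseq w j) 0)) (word_map (mkseq w k) 1).
  by move=> _ [j _ <-]; apply: word_map_mkseq_le.
have ne : range (fun j => word_map (mkseq w j) 0) !=set0 by exists (word_map (mkseq w 0) 0), 0%N.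
apply/andP; split; last exact: ge_sup.
by apply: sup_upper_bound; [split; [|exists (word_map (mkseq w k) 1)] | exists k].
Qed.

Lemma coding_01 w : 0 <= coding w <= 1.
Proof. exact: coding_bounds 0%N w. Qed.

Lemma coding_near k w y : 0 <= y <= 1 ->
  `|coding w - word_map (mkseq w k) y| <= 2^-1 ^+ k.
Proof.
case/andP=> y0 y1; have /andP[lo hi] := coding_bounds k w.
have := word_map_le hp hq (mkseq w k) y0; have := word_map_le hp hq (mkseq w k) y1.
have := word_mapB p q (mkseq w k) 1 0; rewrite subr0 mulr1.
have := word_ratio_mkseq_le hp hq w k.
by move=> *; rewrite ler_norml; apply/andP; split; lra.
Qed.

Lemma coding_unique w x C :
  (forall k, `|x - word_map (mkseq w k) 0| <= C * 2^-1 ^+ k) -> coding w = x.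
Proof.
move=> Hx; apply/esym/eqP; rewrite -subr_eq0; apply/eqP/(@norm_geometric_eq0 _ _ (C + 1)) => k.
rewrite (_ : x - coding w = (x - word_map (mkseq w k) 0) - (coding w - word_map (mkseq w k) 0)).
  by rewrite mulrDl mul1r (le_trans (ler_normB _ _)) // lerD ?Hx ?coding_near.
by ring.
Qed.

Lemma coding_shift1 w : coding w = Smap p q (w 0%N) (coding (shift 1 w)).
Proof.
have /andP[c0 c1] := coding_01 (shift 1 w).
apply: (@coding_unique _ _ 1) => -[|k].
  have /andP[? ?] := Smap_01 hp hq (w 0%N) (coding_01 (shift 1 w)).
  by rewrite /= subr0 expr0 mulr1 ger0_norm.
rewrite -[k.+1]/(1 + k)%N mkseqD /= SmapB normrM exprS mul1r.
rewrite ler_pM ?normr_ge0 //; last exact: coding_near.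
by rewrite gtr0_norm ?ratio_gt0 // ltW // ratio_lt_half.
Qed.

Lemma coding_prefix k w : coding w = word_map (mkseq w k) (coding (shift k w)).
Proof.
elim: k w => [|k IH] w; first by [].
by rewrite coding_shift1 -[k.+1]/(1 + k)%N mkseqD word_map_cat /= (IH (shift 1 w)).
Qed.

(* Some address of [x]; a junk value when [x] has none, e.g. outside K. *)
Definition address x : nat -> 'I_4 := xget (fun=> ord0) [set w | coding w = x].

Definition ccons (i : 'I_4) w : nat -> 'I_4 := fun n => if n is n'.+1 then w n' else i.

Lemma coding_cons i w : coding (ccons i w) = Smap p q i (coding w).
Proof. exact: coding_shift1. Qed.

End Coding.

Lemma closed_approx (R : realType) (A : set R) x : closed A ->
  (forall e, 0 < e -> exists2 y, A y & `|x - y| < e) -> A x.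
Proof.
move=> cA Hx; apply: cA => B /nbhs_ballP [e e0 sB].
by have [y Ay xy] := Hx e e0; exists y; split => //; apply: sB; rewrite -ball_normE.
Qed.

Lemma compact_sep_scaled (R : realType) (C : set R) (s t : R) : compact C ->
  (forall a b, C a -> C b -> s * a <> t * b) ->
  exists2 g, 0 < g & forall a b, C a -> C b -> g <= `|s * a - t * b|.
Proof.
move=> Cc Hst; pose h (z : R * R) := s * z.1 - t * z.2.
have hc : continuous h.
  move=> z; apply: cvgB; apply: cvgM; try exact: cvg_cst; [exact: cvg_fst|exact: cvg_snd].
have /(compact_closed (@Rhausdorff R)) /closed_openC hC : compact (h @` (C `*` C)).
  exact: continuous_compact (continuous_subspaceT hc) (compact_setX Cc Cc).
have /hC /nbhs_ballP [g g0 sB] : (~` (h @` (C `*` C))) 0.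
  by move=> [[a b] [/= Ca Cb]] /eqP; rewrite /h subr_eq0 => /eqP /(Hst _ _ Ca Cb).
exists g => // a b Ca Cb; rewrite leNgt; apply/negP => lt.
have /sB : ball (0 : R) g (h (a, b)) by rewrite -ball_normE /= sub0r normrN.
by apply; exists (a, b).
Qed.

Section Attractor.
Variables (R : realType) (p q : R).
Hypotheses (hp : 0 < p < 2^-1) (hq : 0 < q < 2^-1).
Variable K : set R.
Hypothesis hK : is_attractor p q K.
Implicit Types (w : nat -> 'I_4) (x y : R).

Lemma attractor_Smap i y : K y -> K (Smap p q i y).
Proof. by case: hK => _ [_ KE] Ky; rewrite KE; exists i => //; exists y. Qed.

Lemma attractor_word_map s y : K y -> K (word_map p q s y).
Proof. by elim: s => [|i s IH] //= /IH; apply: attractor_Smap. Qed.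

Lemma attractor_decomp x : K x -> exists i y, K y /\ x = Smap p q i y.
Proof. by case: hK => _ [_ KE]; rewrite {1}KE => -[i _ [y Ky <-]]; exists i, y. Qed.

Lemma attractor_closed : closed K.
Proof. by case: hK => _ [Kc _]; apply: compact_closed (@Rhausdorff R) Kc. Qed.

Lemma attractor_bounded : exists M, forall x, K x -> `|x| <= M.
Proof.
case: hK => _ [/compact_bounded [M [_ HM]] _]; exists (`|M| + 1) => x Kx.
by apply: HM => //; rewrite (le_lt_trans (ler_norm M)) // ltrDl.
Qed.

Lemma coding_in_attractor w : K (coding p q w).
Proof.
case: hK => -[y Ky] _; apply: closed_approx attractor_closed _ => e e0.
have [k hk] := geometric_lt (1 + `|y|) e0.
exists (word_map p q (mkseq w k) y); first exact: attractor_word_map.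
rewrite (_ : coding p q w - _ = (coding p q w - word_map p q (mkseq w k) 0)
   - (word_map p q (mkseq w k) y - word_map p q (mkseq w k) 0)); last by ring.
apply: le_lt_trans hk; apply: le_trans (ler_normB _ _) _.
rewrite mulrDl mul1r lerD ?coding_near ?lexx ?ler01 //.
rewrite word_mapB subr0 normrM mulrC ler_wpM2l ?normr_ge0 //.
rewrite ger0_norm; last exact/ltW/(word_ratio_gt0 hp hq).
exact: word_ratio_mkseq_le.
Qed.

Lemma coding_onto x : K x -> exists w, coding p q w = x.
Proof.
move=> Kx; have [step Hstep] : {step : R -> 'I_4 * R &
    forall y, K y -> K (step y).2 /\ y = Smap p q (step y).1 (step y).2}.
  apply: (@choice _ _ (fun y s => K y -> K s.2 /\ y = Smap p q s.1 s.2)) => y.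
  case: (pselect (K y)) => [/attractor_decomp [i [z [Kz ->]]]|nKy].
    by exists (i, z).
  by exists (ord0, 0).
pose next y := (step y).2; pose w n := (step (iter n next x)).1.
have Hw k : K (iter k next x) /\ x = word_map p q (mkseq w k) (iter k next x).
  elim: k => [//|k [Kk ex]]; have [Kn en] := Hstep _ Kk.
  by rewrite iterS mkseqS /word_map foldr_rcons -en.
have [M HM] := attractor_bounded; exists w; apply: (@coding_unique _ _ _ hp hq _ _ M) => k.
have [Kk {1}->] := Hw k; rewrite word_mapB subr0 normrM mulrC ler_pM ?normr_ge0 ?HM //.
rewrite ger0_norm; last exact/ltW/(word_ratio_gt0 hp hq).
exact: word_ratio_mkseq_le.
Qed.

Lemma attractor_01 x : K x -> 0 <= x <= 1.
Proof. by move=> /coding_onto [w <-]; apply: coding_01. Qed.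

Lemma addressK x : K x -> coding p q (address p q x) = x.
Proof. by move=> /coding_onto ex; apply: (xgetPex (fun=> ord0) ex). Qed.

End Attractor.

Definition mirror (i : 'I_4) : 'I_4 := inord ((i + 2) %% 4).

Lemma small_mirror i : small (mirror i) = ~~ small i.
Proof. by rewrite /small /mirror inordK ?ltn_pmod //; case: i => [[|[|[|[|n]]]] Hi]. Qed.

Definition occ (b : nat) (s : seq 'I_4) : nat := count (fun i : 'I_4 => val i == b) s.

Lemma first_big_letter (w : nat -> 'I_4) N : ~~ all small (mkseq w N) ->
  exists j, [/\ (j < N)%N, ~~ small (w j) & all small (mkseq w j)].
Proof.
move=> /allPn [x /mapP [l]]; rewrite mem_iota add0n => /andP[_ lN] -> wl.
have ex : exists j, ~~ small (w j) by exists l.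
case: (ex_minnP ex) => j wj jmin; exists j; split => //.
  exact: leq_ltn_trans (jmin _ wl) lN.
apply/allP => _ /mapP [l' + ->]; rewrite mem_iota add0n => /andP[_ l'j].
by apply: contraLR l'j => /jmin; rewrite -leqNgt.
Qed.

Section Mirror.
Variables (R : realType) (p q : R).
Implicit Types (w : nat -> 'I_4) (x y : R).

Lemma Smap_mirror i x : Smap p q (mirror i) (1 - x) = 1 - Smap p q i x.
Proof.
rewrite /Smap /mirror inordK ?ltn_pmod //.
by case: i => [[|[|[|[|n]]]] Hi] //=; ring.
Qed.

Lemma word_map_mirror s y : word_map p q (map mirror s) (1 - y) = 1 - word_map p q s y.
Proof. by elim: s => [|i s IH] //=; rewrite IH Smap_mirror. Qed.

Lemma coding_mirror w : 0 < p < 2^-1 -> 0 < q < 2^-1 ->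
  coding p q (mirror \o w) = 1 - coding p q w.
Proof.
move=> hp hq; apply: (@coding_unique _ _ _ hp hq _ _ 1) => k.
rewrite /mkseq map_comp -/(mkseq w k) -(subrr 1) word_map_mirror mul1r.
rewrite (_ : _ - _ = - (coding p q w - word_map p q (mkseq w k) 1)); last by ring.
by rewrite normrN coding_near // ler01 lexx.
Qed.

End Mirror.

Section SmallWords.
Variables (R : realType) (p q : R).
Implicit Types (s : seq 'I_4) (w : nat -> 'I_4) (y : R).

Lemma word_ratio_small s : all small s -> word_ratio p q s = p ^+ occ 0 s * q ^+ occ 1 s.
Proof.
rewrite /word_ratio; elim: s => [|i s IH]; first by rewrite big_nil mulr1.
rewrite big_cons /= => /andP[si /IH ->].
by case: i si => [[|[|n]] Hi] //= _; rewrite /ratio /= exprS; ring.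
Qed.

Lemma word_map_small s y : all small s -> word_map p q s y = word_ratio p q s * y.
Proof.
rewrite /word_ratio; elim: s => [|i s IH]; first by rewrite big_nil mul1r.
by rewrite big_cons /= => /andP[si /IH ->]; rewrite Smap_small // mulrA.
Qed.

Hypotheses (hp : 0 < p < 2^-1) (hq : 0 < q < 2^-1).

Lemma word_ratio_ge s : Num.min p q ^+ size s <= word_ratio p q s.
Proof.
case/andP: hp => hp0 _; case/andP: hq => hq0 _.
rewrite /word_ratio; elim: s => [|i s IH]; first by rewrite big_nil.
have m0 : 0 <= Num.min p q by rewrite le_min !ltW.
rewrite big_cons exprS ler_pM // ?exprn_ge0 //.
by rewrite /ratio; case: ifP => _; rewrite ge_min lexx ?orbT.
Qed.

Lemma coding_small_prefix w j : all small (mkseq w j) ->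
  coding p q w = word_ratio p q (mkseq w j) * coding p q (shift j w).
Proof. by move=> sw; rewrite {1}(coding_prefix hp hq j) word_map_small. Qed.

Lemma coding_le_small_prefix w j : all small (mkseq w j) -> coding p q w <= 2^-1 ^+ j.
Proof.
move=> /coding_small_prefix ->; have /andP[c0 c1] := coding_01 hp hq (shift j w).
apply: le_trans (word_ratio_mkseq_le hp hq w j).
by rewrite ler_piMr // ltW // word_ratio_gt0.
Qed.

Lemma ratio_le_max i : ratio p q i <= Num.max p q.
Proof. by rewrite /ratio; case: ifP => _; rewrite le_max lexx ?orbT. Qed.

Lemma coding_small_head w : small (w 0%N) -> coding p q w <= Num.max p q.
Proof.
move=> w0; rewrite coding_shift1 // Smap_small //.
have /andP[c0 c1] := coding_01 hp hq (shift 1 w).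
have := ratio_gt0 hp hq (w 0%N); have := ratio_le_max (w 0%N); nra.
Qed.

Lemma coding_big_head w : ~~ small (w 0%N) -> 1 - Num.max p q <= coding p q w.
Proof.
move=> w0; rewrite coding_shift1 // Smap_big //.
have /andP[c0 c1] := coding_01 hp hq (shift 1 w).
have := ratio_gt0 hp hq (w 0%N); have := ratio_le_max (w 0%N); nra.
Qed.

Lemma coding_zeros : coding p q (fun=> ord0) = 0.
Proof.
apply: (@coding_unique _ _ _ hp hq _ _ 0) => k; rewrite mul0r word_map_small.
  by rewrite mulr0 subr0 normr0.
by apply/allP => _ /mapP [l _ ->].
Qed.

Lemma coding_ones : coding p q (fun=> mirror ord0) = 1.
Proof. by rewrite (coding_mirror (fun=> ord0)) // coding_zeros subr0. Qed.

Lemma max_lt_half : Num.max p q < 2^-1.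
Proof. by rewrite gt_max; case/andP: hp => _ ->; case/andP: hq. Qed.

Lemma coding_heads_apart w v : small (w 0%N) -> ~~ small (v 0%N) ->
  1 - 2 * Num.max p q <= `|coding p q w - coding p q v|.
Proof.
move=> /coding_small_head w0 /coding_big_head v0.
by have hmax := max_lt_half; rewrite distrC ger0_norm; lra.
Qed.

End SmallWords.

(** * Separation of the pieces of a twofold Cantor set *)

Section Twofold.
Variables (R : realType) (p q : R).
Hypotheses (hp : 0 < p < 2^-1) (hq : 0 < q < 2^-1).
Variable K : set R.
Hypotheses (hK : is_attractor p q K) (htf : twofold p q K).
Implicit Types (a b : R) (w : nat -> 'I_4).
Local Notation A := (Aset p q K).

Lemma attractor_0 : K 0.
Proof. by rewrite -(coding_zeros hp hq); apply: coding_in_attractor. Qed.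

Lemma attractor_1 : K 1.
Proof. by rewrite -(coding_ones hp hq); apply: coding_in_attractor. Qed.

Lemma Aset_coding w : ~~ small (w 0%N) -> A (coding p q w).
Proof.
rewrite coding_shift1 //; have Kc := coding_in_attractor hp hq hK (shift 1 w).
case: (w 0%N) => [[|[|[|[|n]]]] Hi] //= _; [left|right]; exists (coding p q (shift 1 w)) => //.
  by congr Smap; apply: val_inj; rewrite /= inordK.
by congr Smap; apply: val_inj; rewrite /= inordK.
Qed.

Lemma Aset_bounds a : A a -> 2^-1 < a <= 1.
Proof.
case/andP: hp => hp0 hp1; case/andP: hq => hq0 hq1.
case=> -[y /(attractor_01 hp hq hK) /andP[y0 y1] <-]; rewrite /Smap inordK //=.
  by apply/andP; split; nra.
by apply/andP; split; nra.
Qed.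

Lemma iter_Smap0 m x : iter m (Smap p q (inord 0)) x = p ^+ m * x.
Proof. by elim: m => [|m IH] /=; rewrite ?mul1r // IH /Smap inordK //= exprS mulrA. Qed.

Lemma iter_Smap1 m x : iter m (Smap p q (inord 1)) x = q ^+ m * x.
Proof. by elim: m => [|m IH] /=; rewrite ?mul1r // IH /Smap inordK //= exprS mulrA. Qed.

Lemma twofold_neq m n a b : (0 < m)%N -> (0 < n)%N -> A a -> A b -> p ^+ m * a <> q ^+ n * b.
Proof.
move=> m0 n0 Aa Ab E; suff : set0 (p ^+ m * a) by [].
rewrite -(htf m0 n0); split; first by exists a; rewrite ?iter_Smap0.
by exists b; rewrite ?iter_Smap1.
Qed.

Lemma monomial_Aset_neq d e a b : (0 < d + e)%N -> A a -> A b -> p ^+ d * q ^+ e * a <> b.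
Proof.
case/andP: hp => hp0 hp1; case/andP: hq => hq0 hq1.
move=> de /Aset_bounds /andP[a0 a1] /Aset_bounds /andP[b0 b1] E.
have c0 : 0 < p ^+ d * q ^+ e by rewrite mulr_gt0 // exprn_gt0.
have pd : p ^+ d <= 2^-1 ^+ d by rewrite lerXn2r ?nnegrE // ltW.
have qe : q ^+ e <= 2^-1 ^+ e by rewrite lerXn2r ?nnegrE // ltW.
have : p ^+ d * q ^+ e <= 2^-1 ^+ (d + e) by rewrite exprD ler_pM // exprn_ge0 // ltW.
have : (2^-1 : R) ^+ (d + e) <= 2^-1.
  by rewrite -[leRHS]expr1; apply: ler_wiXn2l => //; lra.
nra.
Qed.

Lemma monomial_Aset_inj m n m' n' a b : A a -> A b ->
  p ^+ m * q ^+ n * a = p ^+ m' * q ^+ n' * b -> m = m' /\ n = n'.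
Proof.
wlog mm : m n m' n' a b / (m' <= m)%N.
  move=> H Aa Ab E; case: (leqP m' m) => [mm|/ltnW mm]; first exact: H mm Aa Ab E.
  by have [-> ->] := H _ _ _ _ _ _ mm Ab Aa (esym E).
have pX0 k : p ^+ k != 0 by rewrite expf_neq0 // gt_eqF //; case/andP: hp.
have qX0 k : q ^+ k != 0 by rewrite expf_neq0 // gt_eqF //; case/andP: hq.
move=> Aa Ab E; have {}E : p ^+ (m - m') * q ^+ n * a = q ^+ n' * b.
  by apply: (mulfI (pX0 m')); rewrite !mulrA -exprD subnKC.
have [nn|nn] := leqP n' n.
  have {}E : p ^+ (m - m') * q ^+ (n - n') * a = b.
    by apply: (mulfI (qX0 n')); rewrite mulrCA !mulrA -(mulrA (p ^+ _)) -exprD subnK.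
  case: (posnP (m - m' + (n - n'))) => [|de]; first by lia.
  by have := monomial_Aset_neq de Aa Ab E.
have {}E : p ^+ (m - m') * a = q ^+ (n' - n) * b.
  by apply: (mulfI (qX0 n)); rewrite mulrCA !mulrA -exprD subnKC 1?ltnW // -E mulrAC.
have e0 : (0 < n' - n)%N by rewrite subn_gt0.
case: (posnP (m - m')) => [d0|d0]; last by have := twofold_neq d0 e0 Aa Ab E.
by case: (@monomial_Aset_neq 0 _ _ _ e0 Ab Aa); rewrite expr0 mul1r -E d0 expr0 mul1r.
Qed.

Lemma Aset_compact : compact A.
Proof.
case: hK => _ [Kc _].
by apply: compactU; apply: continuous_compact Kc; apply/continuous_subspaceT/Smap_continuous.
Qed.

Lemma monomial_sep N : exists2 g, 0 < g & forall m n m' n' a b,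
  (m <= N)%N -> (n <= N)%N -> (m' <= N)%N -> (n' <= N)%N -> (m, n) <> (m', n') ->
  A a -> A b -> g <= `|p ^+ m * q ^+ n * a - p ^+ m' * q ^+ n' * b|.
Proof.
pose P (t : ('I_N.+1 * 'I_N.+1) * ('I_N.+1 * 'I_N.+1)) g := forall a b,
  ((t.1.1 : nat), (t.1.2 : nat)) <> ((t.2.1 : nat), (t.2.2 : nat)) -> A a -> A b ->
  g <= `|p ^+ t.1.1 * q ^+ t.1.2 * a - p ^+ t.2.1 * q ^+ t.2.2 * b|.
have [|[[m n] [m' n']]|g g0 Hg] := @finite_pos_bound R _ P.
- by move=> t g g' /andP[_ g'g] Pg a b ne Aa Ab; apply: le_trans g'g (Pg a b ne Aa Ab).
- case: (pselect ((m : nat, n : nat) = (m' : nat, n' : nat))) => [e|ne].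
    by exists 1 => // a b /(_ e).
  have neq a b : A a -> A b -> p ^+ m * q ^+ n * a <> p ^+ m' * q ^+ n' * b.
    by move=> Aa Ab /(monomial_Aset_inj Aa Ab) [e1 e2]; apply: ne; rewrite e1 e2.
  have [g g0 Hg] := compact_sep_scaled Aset_compact neq.
  by exists g => // a b _; apply: Hg.
- exists g => // m n m' n' a b mN nN m'N n'N.
  exact: (Hg ((@Ordinal N.+1 m mN, @Ordinal N.+1 n nN),
              (@Ordinal N.+1 m' m'N, @Ordinal N.+1 n' n'N))).
Qed.

End Twofold.

(** * The conjugacy *)

Section Transfer.
Variables (R : realType) (p q p' q' : R).
Hypotheses (hp : 0 < p < 2^-1) (hq : 0 < q < 2^-1).
Hypotheses (hp' : 0 < p' < 2^-1) (hq' : 0 < q' < 2^-1).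
Variable K : set R.
Hypotheses (hK : is_attractor p q K) (htf : twofold p q K).
Implicit Types (w v : nat -> 'I_4).
Local Notation c := (coding p q).
Local Notation c' := (coding p' q').
Local Notation A := (Aset p q K).
Local Notation rho := (Num.min p q).

Let rho_gt0 : 0 < rho.
Proof. by rewrite lt_min; case/andP: hp => -> _; case/andP: hq. Qed.

Let rho_le1 : rho <= 1.
Proof. by case/andP: hp => _ hp1; rewrite ge_min; apply/orP; left; lra. Qed.

Lemma coding_ge_first_big w j : all small (mkseq w j) -> ~~ small (w j) ->
  rho ^+ j / 2 < c w /\ A (c (shift j w)).
Proof.
move=> sw wj; have Aw : A (c (shift j w)).
  by apply: (Aset_coding hp hq hK); rewrite /shift addn0.
split=> //; have /andP[a0 _] := Aset_bounds hp hq hK Aw.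
have := word_ratio_ge hp hq (mkseq w j); rewrite size_mkseq => rj.
have := exprn_gt0 j rho_gt0; rewrite (coding_small_prefix hp hq sw); nra.
Qed.

Lemma coding_dist_small_prefixes w v N : all small (mkseq w N) -> all small (mkseq v N) ->
  `|c' w - c' v| <= 2^-1 ^+ N.
Proof.
move=> /(coding_le_small_prefix hp' hq') w1 /(coding_le_small_prefix hp' hq') v1.
have /andP[w0 _] := coding_01 hp' hq' w; have /andP[v0 _] := coding_01 hp' hq' v.
by rewrite ler_norml; apply/andP; split; lra.
Qed.

Section Step.
Variables (k : nat) (dk : R).
Hypothesis Hk : forall w v, `|c w - c v| < dk -> `|c' w - c' v| <= 2^-1 ^+ k.
Variables (N1 : nat) (g d : R).
Hypothesis k_lt_N1 : (k < N1)%N.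
Hypothesis N1_small : 2^-1 ^+ N1 <= rho ^+ k / 4.
Hypothesis sep_g : forall m n m' n' a b,
  (m <= N1)%N -> (n <= N1)%N -> (m' <= N1)%N -> (n' <= N1)%N -> (m, n) <> (m', n') ->
  A a -> A b -> g <= `|p ^+ m * q ^+ n * a - p ^+ m' * q ^+ n' * b|.
Hypotheses (d_gt0 : 0 < d) (d_heads : d <= 1 - 2 * Num.max p q).
Hypotheses (d_gap : d <= rho ^+ k / 4) (d_sep : d <= g) (d_scale : d <= dk * rho ^+ N1).

Lemma transfer_step_same_prefix w v j j' :
  (0 < j)%N -> (j <= N1)%N -> all small (mkseq w j) -> all small (mkseq v j') ->
  occ 0 (mkseq w j) = occ 0 (mkseq v j') -> occ 1 (mkseq w j) = occ 1 (mkseq v j') ->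
  `|c w - c v| < d -> `|c' w - c' v| <= 2^-1 ^+ k.+1.
Proof.
move=> j0 jN1 sw sv e0 e1 dwv.
have er pp qq : word_ratio pp qq (mkseq w j) = word_ratio pp qq (mkseq v j').
  by rewrite !word_ratio_small // e0 e1.
move: dwv; rewrite (coding_small_prefix hp hq sw) (coding_small_prefix hp hq sv).
rewrite (coding_small_prefix hp' hq' sw) (coding_small_prefix hp' hq' sv) !er -!mulrBr !normrM.
set r := word_ratio p q _; set r' := word_ratio p' q' _ => dwv.
have r0 : 0 < r := word_ratio_gt0 hp hq _.
have rN1 : rho ^+ N1 <= r.
  rewrite /r -er (le_trans _ (word_ratio_ge hp hq _)) // size_mkseq.
  by apply: ler_wiXn2l => //; exact: ltW.
have /Hk : `|c (shift j w) - c (shift j' v)| < dk.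
  have dk0 : 0 < dk.
    by rewrite -(pmulr_lgt0 _ (exprn_gt0 N1 rho_gt0)); apply: lt_le_trans d_gt0 d_scale.
  rewrite gtr0_norm // in dwv; rewrite ltNge; apply/negP => hX.
  have : dk * rho ^+ N1 <= `|c (shift j w) - c (shift j' v)| * r.
    by apply: ler_pM => //; [exact: ltW | exact/exprn_ge0/ltW].
  rewrite mulrC; move: d_scale; lra.
rewrite exprS; apply: ler_pM; rewrite ?normr_ge0 //.
rewrite ger0_norm /r' -?er ?(le_trans (word_ratio_mkseq_le hp' hq' _ _)) //.
- by rewrite -[leRHS]expr1; apply: ler_wiXn2l => //; lra.
- exact/ltW/word_ratio_gt0.
Qed.

Lemma transfer_step_shallow w v j : (0 < j)%N -> (j <= k)%N ->
  ~~ small (w j) -> all small (mkseq w j) ->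
  `|c w - c v| < d -> `|c' w - c' v| <= 2^-1 ^+ k.+1.
Proof.
move=> j0 jk wj sw dwv; have [cw Aw] := coding_ge_first_big sw wj.
have rkj : rho ^+ k <= rho ^+ j by apply: ler_wiXn2l => //; exact: ltW.
have jN1 : (j <= N1)%N by apply: leq_trans jk (ltnW k_lt_N1).
(* Unless v starts with N1 small letters (then [c v] is too small), the first
   big letters of w and v follow blocks with different S_1/S_2 letter counts,
   so that the images are g apart, or both images are the same rescaling of
   images of tails, to which [Hk] applies. *)
have [sv|/first_big_letter [j' [j'N1 vj' sv]]] := boolP (all small (mkseq v N1)).
  have := coding_le_small_prefix hp hq sv.
  by move: dwv N1_small d_gap; rewrite ltr_norml => /andP[_ ?]; lra.
have [_ Av] := coding_ge_first_big sv vj'.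
have [[e0 e1]|ne] := pselect ((occ 0 (mkseq w j), occ 1 (mkseq w j)) =
                              (occ 0 (mkseq v j'), occ 1 (mkseq v j'))).
  exact: transfer_step_same_prefix j0 jN1 sw sv e0 e1 dwv.
have occ_le b u n : (n <= N1)%N -> (occ b (mkseq u n) <= N1)%N.
  by move=> nN1; apply: leq_trans (count_size _ _) _; rewrite size_mkseq.
have := sep_g (occ_le 0%N w j jN1) (occ_le 1%N w j jN1)
  (occ_le 0%N v j' (ltnW j'N1)) (occ_le 1%N v j' (ltnW j'N1)) ne Aw Av.
by rewrite -!word_ratio_small // -!coding_small_prefix //; move: dwv d_sep; lra.
Qed.

Lemma transfer_step_small_heads w v : small (w 0%N) -> small (v 0%N) ->
  `|c w - c v| < d -> `|c' w - c' v| <= 2^-1 ^+ k.+1.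
Proof.
wlog nsw : w v / ~~ all small (mkseq w k.+1).
  move=> H w0 v0 dwv; have [sw|nsw] := boolP (all small (mkseq w k.+1)); last exact: H.
  have [sv|nsv] := boolP (all small (mkseq v k.+1)); first exact: coding_dist_small_prefixes.
  by rewrite distrC; apply: H nsv v0 w0 _; rewrite distrC.
move: nsw => /first_big_letter [j [jk wj sw]] w0 _.
have j0 : (0 < j)%N by rewrite lt0n; apply: contraNneq wj => ->.
exact: transfer_step_shallow j0 jk wj sw.
Qed.

Lemma transfer_step w v : `|c w - c v| < d -> `|c' w - c' v| <= 2^-1 ^+ k.+1.
Proof.
move=> dwv; have [w0|w0] := boolP (small (w 0%N)); have [v0|v0] := boolP (small (v 0%N)).
- exact: transfer_step_small_heads.
- by have := coding_heads_apart hp hq w0 v0; move: d_heads; lra.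
- by have := coding_heads_apart hp hq v0 w0; rewrite distrC; move: d_heads; lra.
have mirror_dist pp qq : 0 < pp < 2^-1 -> 0 < qq < 2^-1 ->
    `|coding pp qq (mirror \o w) - coding pp qq (mirror \o v)| =
    `|coding pp qq w - coding pp qq v|.
  by move=> hpp hqq; rewrite !coding_mirror // -normrN; congr `|_|; ring.
rewrite -mirror_dist //; apply: transfer_step_small_heads; rewrite ?small_mirror //.
by rewrite mirror_dist.
Qed.

End Step.

Lemma coding_transfer_uniform k : exists2 d, 0 < d &
  forall w v, `|c w - c v| < d -> `|c' w - c' v| <= 2^-1 ^+ k.
Proof.
elim: k => [|k [dk dk0 Hk]].
  exists 1 => // w v _; rewrite expr0.
  have /andP[? ?] := coding_01 hp' hq' w; have /andP[? ?] := coding_01 hp' hq' v.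
  by rewrite ler_norml; apply/andP; split; lra.
have gap0 : 0 < rho ^+ k / 4 by rewrite divr_gt0 ?exprn_gt0.
have [N0 hN0] := geometric_lt 1 gap0; rewrite mul1r in hN0.
have N1_small : 2^-1 ^+ (N0 + k.+1) <= rho ^+ k / 4.
  apply/ltW/(le_lt_trans _ hN0).
  by apply: ler_wiXn2l; rewrite ?leq_addr //; lra.
have [g g0 Hg] := monomial_sep hp hq hK htf (N0 + k.+1).
have heads0 : 0 < 1 - 2 * Num.max p q by have := max_lt_half hp hq; lra.
exists (Num.min (Num.min (1 - 2 * Num.max p q) (rho ^+ k / 4))
                (Num.min g (dk * rho ^+ (N0 + k.+1)))).
  by rewrite !lt_min heads0 gap0 g0 mulr_gt0 ?exprn_gt0.
apply: (transfer_step Hk _ N1_small Hg); rewrite ?leq_addl //.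
- by rewrite !lt_min heads0 gap0 g0 mulr_gt0 ?exprn_gt0.
- by rewrite !ge_min lexx.
- by rewrite !ge_min lexx !orbT.
- by rewrite !ge_min lexx !orbT.
- by rewrite !ge_min lexx !orbT.
Qed.

Lemma coding_transfer w v : c w = c v -> c' w = c' v.
Proof.
move=> e; apply/eqP; rewrite -subr_eq0; apply/eqP/(@norm_geometric_eq0 _ _ 1) => k.
have [d d0 Hd] := coding_transfer_uniform k.
by rewrite mul1r Hd // e subrr normr0.
Qed.

End Transfer.

Lemma within_continuous_eps (R : realType) (A : set R) (f : R -> R) :
  (forall x, A x -> forall e, 0 < e -> exists2 d, 0 < d &
     forall y, A y -> `|x - y| < d -> `|f x - f y| < e) ->
  {within A, continuous f}.
Proof.
move=> H; apply/subspace_continuousP => x Ax; apply/cvgrPdist_lt => e e0.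
have [d d0 Hd] := H x Ax e e0; rewrite near_withinE; apply/nbhs_ballP.
by exists d => // y /= xy Ay; apply: Hd => //; rewrite -ball_normE.
Qed.

Section Isomorphism.
Variables (R : realType) (p q p' q' : R).
Hypotheses (hp : 0 < p < 2^-1) (hq : 0 < q < 2^-1).
Hypotheses (hp' : 0 < p' < 2^-1) (hq' : 0 < q' < 2^-1).
Variables K K' : set R.
Hypotheses (hK : is_attractor p q K) (hK' : is_attractor p' q' K').
Hypothesis htf : twofold p q K.

Definition recode x : R := coding p' q' (address p q x).

Lemma recode_continuous : {within K, continuous recode}.
Proof.
apply: within_continuous_eps => x Kx e e0.
have [k hk] := geometric_lt 1 e0; rewrite mul1r in hk.
have [d d0 Hd] := coding_transfer_uniform hp hq hp' hq' hK htf k.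
exists d => // y Ky xy; apply: le_lt_trans hk; apply: Hd.
by rewrite !(addressK hp hq hK).
Qed.

Lemma recode_attractor x : K x -> K' (recode x).
Proof. by move=> _; apply: coding_in_attractor. Qed.

Lemma recode_Smap i x : K x -> recode (Smap p q i x) = Smap p' q' i (recode x).
Proof.
move=> Kx; rewrite /recode -coding_cons //; apply: (coding_transfer hp hq hp' hq' hK htf).
by rewrite coding_cons // !(addressK hp hq hK) //; apply: attractor_Smap.
Qed.

End Isomorphism.

Lemma recodeK (R : realType) (p q p' q' : R) (K K' : set R) :
  0 < p < 2^-1 -> 0 < q < 2^-1 -> 0 < p' < 2^-1 -> 0 < q' < 2^-1 ->
  is_attractor p q K -> is_attractor p' q' K' -> twofold p' q' K' ->
  forall x, K x -> recode p' q' p q (recode p q p' q' x) = x.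
Proof.
move=> hp hq hp' hq' hK hK' htf' x Kx; rewrite /recode -{2}(addressK hp hq hK Kx).
apply: (coding_transfer hp' hq' hp hq hK' htf').
by rewrite (addressK hp' hq' hK') //; apply: coding_in_attractor.
Qed.

Lemma twofold_isomorphism (R : realType) (p q p' q' : R) (K K' : set R) :
  0 < p < 2^-1 -> 0 < q < 2^-1 -> 0 < p' < 2^-1 -> 0 < q' < 2^-1 ->
  is_attractor p q K -> is_attractor p' q' K' -> twofold p q K -> twofold p' q' K' ->
  exists f : R -> R, homeo_on K K' f /\
    forall (i : 'I_4) x, K x -> f (Smap p q i x) = Smap p' q' i (f x).
Proof.
move=> hp hq hp' hq' hK hK' htf htf'.
exists (recode p q p' q'); split; last exact: recode_Smap.
exists (recode p' q' p q); split; first exact: recode_attractor.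
split; first exact: recode_attractor.
split; first exact: (recodeK hp hq hp' hq' hK hK' htf').
split; first exact: (recodeK hp' hq' hp hq hK' hK htf).
by split; apply: recode_continuous.
Qed.

(** * Rigidity of interval extensions *)

Section Lattice.
Variables (R : realType) (al be : R).

Definition lattice (z : R) := exists a b : int, z = a%:~R * al + b%:~R * be.

Lemma latticeD x y : lattice x -> lattice y -> lattice (x + y).
Proof. by move=> [a [b ->]] [a' [b' ->]]; exists (a + a'), (b + b'); rewrite !intrD; ring. Qed.

Lemma latticeN x : lattice x -> lattice (- x).
Proof. by move=> [a [b ->]]; exists (- a), (- b); rewrite !intrN; ring. Qed.

Lemma latticeMz (z : int) x : lattice x -> lattice (z%:~R * x).
Proof. by move=> [a [b ->]]; exists (z * a), (z * b); rewrite !intrM; ring. Qed.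

Lemma lattice_al : lattice al.
Proof. by exists 1, 0; ring. Qed.

Lemma lattice_be : lattice be.
Proof. by exists 0, 1; ring. Qed.

Lemma lattice_mod u l : lattice u -> lattice l -> 0 < l ->
  (exists l2, [/\ lattice l2, 0 < l2 & l2 <= l / 2]) \/ (exists k : int, u = k%:~R * l).
Proof.
move=> Lu Ll l0; pose z := Num.floor (u / l); pose w := u - z%:~R * l.
have Lw : lattice w by apply: latticeD Lu _; rewrite -mulNr -intrN; apply: latticeMz.
have w0 : 0 <= w by rewrite subr_ge0 -ler_pdivlMr // floor_le.
have wl : w < l.
  have := floorD1_gt (u / l); rewrite -/z ltr_pdivrMr // intrD mulrDl mul1r /w; lra.
have [wp|] := ltrP 0 w; last first.
  by move=> wle; right; exists z; apply/eqP; rewrite -subr_eq0 -/w eq_le wle w0.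
left; have [wh|wh] := lerP w (l / 2); first by exists w.
by exists (l - w); split; [apply: latticeD => //; apply: latticeN|rewrite subr_gt0|lra].
Qed.

Hypotheses (al0 : al < 0) (be0 : be < 0).
Hypothesis indep : forall a b : nat, (0 < a)%N -> (0 < b)%N -> a%:R * al <> b%:R * be.

Lemma lattice_halve l : lattice l -> 0 < l ->
  exists l2, [/\ lattice l2, 0 < l2 & l2 <= l / 2].
Proof.
move=> Ll l0; have multiple u : lattice u -> 0 < u ->
    (exists l2, [/\ lattice l2, 0 < l2 & l2 <= l / 2]) \/
    exists2 k : nat, (0 < k)%N & u = k%:R * l.
  move=> Lu u0; case: (lattice_mod Lu Ll l0) => [|[[k|k] e]]; [by left| |].
    by right; exists k => //; move: u0; rewrite e pmulr_lgt0 // -pmulrn ltr0n.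
  by move: u0; rewrite e NegzE intrN mulNr oppr_gt0 pmulr_llt0 // ltrn0.
have al1 : 0 < - al by rewrite oppr_gt0.
have be1 : 0 < - be by rewrite oppr_gt0.
have [h|[k1 k10 e1]] := multiple _ (latticeN lattice_al) al1; first exact: h.
have [h|[k2 k20 e2]] := multiple _ (latticeN lattice_be) be1; first exact: h.
exfalso; apply: (indep k20 k10); apply: oppr_inj; rewrite -!mulrN e1 e2; ring.
Qed.

Lemma lattice_small e : 0 < e -> exists l, [/\ lattice l, 0 < l & l < e].
Proof.
move=> e0; have H k : exists l, [/\ lattice l, 0 < l & l <= - al * 2^-1 ^+ k].
  elim: k => [|k [l [Ll l0 lk]]].
    by exists (- al); rewrite expr0 mulr1 oppr_gt0; split => //; apply: latticeN lattice_al.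
  have [l2 [L2 l20 l2h]] := lattice_halve Ll l0.
  by exists l2; split => //; rewrite exprS mulrCA; move: lk; lra.
have [k hk] := geometric_lt (- al) e0; have [l [Ll l0 lk]] := H k.
by exists l; split => //; apply: le_lt_trans hk.
Qed.

Lemma lattice_dense x y : x < y -> exists l, [/\ lattice l, x < l & l < y].
Proof.
rewrite -subr_gt0 => /lattice_small [s [Ls s0 sl]].
exists ((Num.floor (x / s) + 1)%:~R * s); split; first exact: latticeMz.
  by rewrite -ltr_pdivrMr // floorD1_gt.
have : (Num.floor (x / s))%:~R * s <= x by rewrite -ler_pdivlMr // floor_le.
by rewrite intrD mulrDl mul1r; lra.
Qed.

End Lattice.

Lemma int_split (a : int) : exists i m : nat, a = i%:Z - m%:Z.
Proof.
by case: a => n; [exists n, 0%N; rewrite subr0 | exists 0%N, n.+1; rewrite NegzE sub0r].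
Qed.

Lemma sign_ratio_le (R : realType) (al be al' be' : R) :
  al < 0 -> be < 0 -> al' < 0 -> be' < 0 ->
  (forall i m j n : nat, m%:R * al + n%:R * be < i%:R * al + j%:R * be ->
                         m%:R * al' + n%:R * be' < i%:R * al' + j%:R * be') ->
  al' / be' <= al / be.
Proof.
move=> al0 be0 al'0 be'0 sign; rewrite leNgt; apply/negP => rr'.
pose r := al / be; pose r' := al' / be'.
have r0 : 0 < r by rewrite /r -mulrNN -invrN divr_gt0 // oppr_gt0.
have eal : al = r * be by rewrite /r divfK // lt_eqF.
have eal' : al' = r' * be' by rewrite /r' divfK // lt_eqF.
(* With a r < N < a r', the comparison of N be and a al is not preserved. *)
pose a := (Num.truncn ((r' - r)^-1)).+1.
have ha : 1 < a%:R * (r' - r).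
  by rewrite -ltr_pdivrMr ?subr_gt0 // div1r truncnS_gt.
pose N := (Num.truncn (a%:R * r)).+1.
have hN1 : a%:R * r < N%:R := truncnS_gt _.
have hN2 : N%:R <= a%:R * r + 1.
  by rewrite -natr1 lerD2r truncn_le mulr_ge0 // ltW.
have := sign a 0 0 N; rewrite !mulr0n !mul0r !add0r !addr0 eal eal'.
have nb (x y : R) : y < 0 -> (N%:R * y < a%:R * (x * y)) = (a%:R * x < N%:R).
  move=> y0; rewrite -subr_gt0 (_ : _ - _ = y * (a%:R * x - N%:R)); last by ring.
  by rewrite nmulr_rgt0 // subr_lt0.
rewrite !nb // => /(_ hN1); lra.
Qed.

Lemma expR_scaled_sum_eq (R : realType) (t x y : R) : x < 0 -> y < 0 ->
  expR (t * x) + expR (t * y) = expR x + expR y -> t = 1.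
Proof.
move=> x0 y0 e; apply/eqP; rewrite eq_le !leNgt; apply/andP; split; apply/negP => ht.
- have ex : expR (t * x) < expR x by rewrite ltr_expR; nra.
  have ey : expR (t * y) < expR y by rewrite ltr_expR; nra.
  by move: (ltrD ex ey); rewrite e ltxx.
- have ex : expR x < expR (t * x) by rewrite ltr_expR; nra.
  have ey : expR y < expR (t * y) by rewrite ltr_expR; nra.
  by move: (ltrD ex ey); rewrite e ltxx.
Qed.

Section Rigidity.
Variables (R : realType) (al be ga al' be' ga' : R).
Hypotheses (al0 : al < 0) (be0 : be < 0) (ga0 : ga < 0).
Hypotheses (al'0 : al' < 0) (be'0 : be' < 0).
Hypothesis indep : forall a b : nat, (0 < a)%N -> (0 < b)%N -> a%:R * al <> b%:R * be.
Hypothesis sign : forall i m j n : nat,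
  (m%:R * al + n%:R * be < i%:R * al + j%:R * be) =
  (m%:R * al' + n%:R * be' < i%:R * al' + j%:R * be').
Hypothesis cut_lt : forall i m j n : nat,
  (m%:R * al + n%:R * be + ga < i%:R * al + j%:R * be) =
  (m%:R * al' + n%:R * be' + ga' < i%:R * al' + j%:R * be').
Hypothesis cut_gt : forall i m j n : nat,
  (i%:R * al + j%:R * be < m%:R * al + n%:R * be + ga) =
  (i%:R * al' + j%:R * be' < m%:R * al' + n%:R * be' + ga').
Hypotheses (sum1 : expR al + expR ga = 1) (sum1' : expR al' + expR ga' = 1).

Lemma sign_scaled : exists2 t, 0 < t & al' = t * al /\ be' = t * be.
Proof.
have er : al / be = al' / be'.
  apply/eqP; rewrite eq_le !sign_ratio_le // => i m j n; first by rewrite sign.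
  by rewrite -sign.
exists (al' / al); first by rewrite -mulrNN -invrN divr_gt0 // oppr_gt0.
split; first by rewrite divfK // lt_eqF.
move/eqP: er; rewrite eqr_div ?(lt_eqF be0) ?(lt_eqF be'0) // => /eqP er.
have al_neq0 : al != 0 := negbT (lt_eqF al0).
by apply: (mulfI al_neq0); rewrite mulrA [al * (al' / al)]mulrC divfK.
Qed.

Lemma rigidity : al' = al /\ be' = be.
Proof.
have [t t0 [eal ebe]] := sign_scaled.
have cut_lattice l : lattice al be l -> (ga < l -> ga' < t * l) /\ (l < ga -> t * l < ga').
  move=> [a [b ->]]; have [i [m ->]] := int_split a; have [j [n ->]] := int_split b.
  rewrite !intrB -!pmulrn; split=> h.
    have : m%:R * al' + n%:R * be' + ga' < i%:R * al' + j%:R * be' by rewrite -cut_lt; lra.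
    by rewrite eal ebe; lra.
  have : i%:R * al' + j%:R * be' < m%:R * al' + n%:R * be' + ga' by rewrite -cut_gt; lra.
  by rewrite eal ebe; lra.
have ega : ga' = t * ga.
  apply/eqP; rewrite eq_le !leNgt; apply/andP; split; apply/negP => h.
  - have [|l [Ll gl lg]] := @lattice_dense _ al be al0 be0 indep ga (ga' / t).
      by rewrite ltr_pdivlMr // mulrC.
    by have [/(_ gl)] := cut_lattice l Ll; rewrite ltr_pdivlMr // mulrC in lg; lra.
  - have [|l [Ll gl lg]] := @lattice_dense _ al be al0 be0 indep (ga' / t) ga.
      by rewrite ltr_pdivrMr // mulrC.
    by have [_ /(_ lg)] := cut_lattice l Ll; rewrite ltr_pdivrMr // mulrC in gl; lra.
have t1 : t = 1 by apply: (@expR_scaled_sum_eq _ t al ga) => //; rewrite -eal -ega sum1 sum1'.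
by rewrite eal ebe t1 !mul1r.
Qed.

End Rigidity.

Lemma homeo01_increasing (R : realType) (F : R -> R) :
  homeo_on `[0, 1] `[0, 1] F -> F 0 < F 1 -> {in `[0, 1] &, {mono F : x y / x < y}}.
Proof.
case=> G [_ [_ [FK [_ [Fc _]]]]] F01; apply/leW_mono_in/le_mono_in.
have I0 : (0 : R) \in `[0, 1] by rewrite in_itv /= lexx ler01.
have I1 : (1 : R) \in `[0, 1] by rewrite in_itv /= lexx ler01.
have Finj : {in `[0, 1] &, injective F}.
  by move=> x y xI yI e; rewrite -(FK x xI) e FK.
case: (itv_continuous_inj_mono Fc Finj) => // Fdec.
by have := Fdec 1 0 I1 I0 ltr01; rewrite ltNge (ltW F01).
Qed.

Lemma monomial_expR (R : realType) (x y : R) (m n : nat) : 0 < x -> 0 < y ->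
  x ^+ m * y ^+ n = expR (m%:R * ln x + n%:R * ln y).
Proof. by move=> x0 y0; rewrite expRD !expRM_natl !lnK. Qed.

Section Extension.
Variables (R : realType) (p q p' q' : R).
Hypotheses (hp : 0 < p < 2^-1) (hq : 0 < q < 2^-1).
Hypotheses (hp' : 0 < p' < 2^-1) (hq' : 0 < q' < 2^-1).
Variable K : set R.
Hypotheses (hK : is_attractor p q K) (htf : twofold p q K).
Variable f : R -> R.
Hypothesis f_Smap : forall (i : 'I_4) x, K x -> f (Smap p q i x) = Smap p' q' i (f x).
Hypothesis f_mono : forall x y, K x -> K y -> (f x < f y) = (x < y).

Let K0 : K 0 := attractor_0 hp hq hK.
Let K1 : K 1 := attractor_1 hp hq hK.

Let S3 : 'I_4 := @Ordinal 4 2 isT.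

Lemma extension_0 : f 0 = 0.
Proof.
have := f_Smap ord0 K0; rewrite /Smap /= mulr0 => e.
by case/andP: hp' => _ ?; nra.
Qed.

Lemma extension_1 : f 1 = 1.
Proof.
have := f_Smap S3 K1; rewrite /Smap /= mulr1 [p + 1]addrC addrK => e.
by case/andP: hp' => _ ?; nra.
Qed.

Lemma extension_1_sub : K (1 - p) /\ f (1 - p) = 1 - p'.
Proof.
have e : 1 - p = Smap p q S3 0 by rewrite /Smap /= mulr0 add0r.
split; first by rewrite e; apply: (attractor_Smap hK).
by rewrite e f_Smap // extension_0 /Smap /= mulr0 add0r.
Qed.

Lemma extension_iter i m x : K x ->
  K (iter m (Smap p q i) x) /\ f (iter m (Smap p q i) x) = iter m (Smap p' q' i) (f x).
Proof.
move=> Kx; elim: m => [//|m [Km fm]] /=.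
by rewrite f_Smap // fm; split=> //; apply: (attractor_Smap hK).
Qed.

Lemma extension_monomial m n x : K x ->
  K (p ^+ m * q ^+ n * x) /\ f (p ^+ m * q ^+ n * x) = p' ^+ m * q' ^+ n * f x.
Proof.
move=> Kx; have [Kn fn] := extension_iter (inord 1) n Kx.
have [Kmn fmn] := extension_iter (inord 0) m Kn.
rewrite -mulrA -(iter_Smap1 p q) -(iter_Smap0 p q); split=> //.
by rewrite fmn fn iter_Smap0 iter_Smap1 mulrA.
Qed.

Lemma extension_lt_log a b A B A' B' : K a -> K b ->
  a = expR A -> b = expR B -> f a = expR A' -> f b = expR B' -> (A < B) = (A' < B').
Proof.
move=> Ka Kb ea eb fa fb.
by rewrite -[LHS]ltr_expR -[RHS]ltr_expR -ea -eb -fa -fb f_mono.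
Qed.

Let p0 : 0 < p. Proof. by case/andP: hp. Qed.
Let q0 : 0 < q. Proof. by case/andP: hq. Qed.
Let p'0 : 0 < p'. Proof. by case/andP: hp'. Qed.
Let q'0 : 0 < q'. Proof. by case/andP: hq'. Qed.
Let subp0 : 0 < 1 - p. Proof. by case/andP: hp => _ ?; lra. Qed.
Let subp'0 : 0 < 1 - p'. Proof. by case/andP: hp' => _ ?; lra. Qed.

Lemma extension_sign i m j n :
  (m%:R * ln p + n%:R * ln q < i%:R * ln p + j%:R * ln q) =
  (m%:R * ln p' + n%:R * ln q' < i%:R * ln p' + j%:R * ln q').
Proof.
have [Ka fa] := extension_monomial m n K1; have [Kb fb] := extension_monomial i j K1.
rewrite !mulr1 in Ka Kb; rewrite extension_1 !mulr1 in fa fb.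
by apply: (extension_lt_log Ka Kb); rewrite ?fa ?fb monomial_expR.
Qed.

Lemma extension_cut i m j n :
  (m%:R * ln p + n%:R * ln q + ln (1 - p) < i%:R * ln p + j%:R * ln q) =
  (m%:R * ln p' + n%:R * ln q' + ln (1 - p') < i%:R * ln p' + j%:R * ln q') /\
  (i%:R * ln p + j%:R * ln q < m%:R * ln p + n%:R * ln q + ln (1 - p)) =
  (i%:R * ln p' + j%:R * ln q' < m%:R * ln p' + n%:R * ln q' + ln (1 - p')).
Proof.
have e x y z (k l : nat) : 0 < x -> 0 < y -> 0 < z ->
    x ^+ k * y ^+ l * z = expR (k%:R * ln x + l%:R * ln y + ln z).
  by move=> x0 y0 z0; rewrite expRD -monomial_expR // lnK.
have [K1p f1p] := extension_1_sub.
have [Ka fa] := extension_monomial m n K1p; have [Kb fb] := extension_monomial i j K1.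
rewrite mulr1 in Kb; rewrite extension_1 !mulr1 in fb; rewrite f1p in fa.
split; [apply: (extension_lt_log Ka Kb)|apply: (extension_lt_log Kb Ka)];
  by rewrite ?fa ?fb ?e ?monomial_expR.
Qed.

Lemma extension_rigid : p' = p /\ q' = q.
Proof.
have lnlt0 (x : R) : 0 < x < 2^-1 -> ln x < 0.
  by case/andP=> ? ?; apply: ln_lt0; apply/andP; split; lra.
have ln1lt0 (x : R) : 0 < x < 2^-1 -> ln (1 - x) < 0.
  by case/andP=> ? ?; apply: ln_lt0; apply/andP; split; lra.
have A1 : Aset p q K 1.
  by left; exists 1; rewrite // /Smap inordK //= mulr1 [p + 1]addrC addrK.
have indep (a b : nat) : (0 < a)%N -> (0 < b)%N -> a%:R * ln p <> b%:R * ln q.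
  move=> a0 b0 e; apply: (twofold_neq htf a0 b0 A1 A1); rewrite !mulr1.
  by rewrite -(lnK p0) -(lnK q0) -!expRM_natl e.
have sum1 : expR (ln p) + expR (ln (1 - p)) = 1 by rewrite !lnK //; ring.
have sum1' : expR (ln p') + expR (ln (1 - p')) = 1 by rewrite !lnK //; ring.
have [e1 e2] := rigidity (lnlt0 _ hp) (lnlt0 _ hq) (ln1lt0 _ hp) (lnlt0 _ hp') (lnlt0 _ hq')
  indep extension_sign (fun i m j n => (extension_cut i m j n).1)
  (fun i m j n => (extension_cut i m j n).2) sum1 sum1'.
by rewrite -(lnK p0) -(lnK q0) -e1 -e2 !lnK.
Qed.

End Extension.

Lemma interval_extension_rigid (R : realType) (p q p' q' : R) (K : set R) (f F : R -> R) :
  0 < p < 2^-1 -> 0 < q < 2^-1 -> 0 < p' < 2^-1 -> 0 < q' < 2^-1 ->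
  is_attractor p q K -> twofold p q K ->
  (forall (i : 'I_4) x, K x -> f (Smap p q i x) = Smap p' q' i (f x)) ->
  homeo_on `[0, 1] `[0, 1] F -> (forall x, K x -> F x = f x) -> (p, q) = (p', q').
Proof.
move=> hp hq hp' hq' hK htf f_Smap hF Ff.
have [K0 K1] := (attractor_0 hp hq hK, attractor_1 hp hq hK).
have F01 : F 0 < F 1.
  by rewrite !Ff // (extension_0 hp hq hp' hK f_Smap) (extension_1 hp hq hp' hK f_Smap).
have f_mono x y : K x -> K y -> (f x < f y) = (x < y).
  move=> Kx Ky; rewrite -!Ff // (homeo01_increasing hF F01) // in_itv /=.
    by case/andP: (attractor_01 hp hq hK Kx) => -> ->.
  by case/andP: (attractor_01 hp hq hK Ky) => -> ->.
by have [-> ->] := extension_rigid hp hq hp' hq' hK htf f_Smap f_mono.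
Qed.

Theorem theorem11 (R : realType) (p q p' q' : R) (K K' : set R) :
  0 < p < 2^-1 -> 0 < q < 2^-1 -> 0 < p' < 2^-1 -> 0 < q' < 2^-1 ->
  is_attractor p q K -> is_attractor p' q' K' ->
  twofold p q K -> twofold p' q' K' ->
  (exists f : R -> R, homeo_on K K' f /\
     forall (i : 'I_4) x, K x -> f (Smap p q i x) = Smap p' q' i (f x)) /\
  ((p, q) <> (p', q') ->
   forall f : R -> R, homeo_on K K' f ->
     (forall (i : 'I_4) x, K x -> f (Smap p q i x) = Smap p' q' i (f x)) ->
     ~ exists F : R -> R, homeo_on `[0, 1] `[0, 1] F /\ forall x, K x -> F x = f x).
Proof.
move=> hp hq hp' hq' hK hK' htf htf'; split; first exact: twofold_isomorphism.
move=> pq f _ f_Smap [F [hF Ff]]; apply: pq.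
exact: interval_extension_rigid hp hq hp' hq' hK htf f_Smap hF Ff.
Qed.
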